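(* Let $\mathcal S=\{1,\dots,S\}$ be a finite state space, let $X=(X_t)_{t\in\mathbb N}$ be a discrete-time process with values in $\mathcal S$, and let $\boldsymbol Z$ be a random covariate vector (not depending on $t$) with support $\mathcal Z$. Assume: (i) for every $\boldsymbol z\in\mathcal Z$, conditionally on $\boldsymbol Z=\boldsymbol z$, $X$ is a homogeneous, irreducible and aperiodic Markov chain of order 1 with transition probabilities $p_{ij}(\boldsymbol z)=\mathbb P(X_{t+1}=j\mid X_t=i,\boldsymbol Z=\boldsymbol z)$ for all $t\in\mathbb N$, $i,j\in\mathcal S$, and transition matrix $\boldsymbol P(\boldsymbol z)=(p_{ij}(\boldsymbol z))_{i,j}$; (ii) $T_0$ is not random, and $0\le T_0<T_1<T_2<\cdots$ are integer observation times with gaps $\tau_k=T_k-T_{k-1}\in\mathbb N^*$, $k\ge1$; set $Y_k=X_{T_k}$; (iii) the sequence $(\tau_k)_{k\ge1}$ is conditionally independent of $X$ given $\boldsymbol Z$; (iv) for every $\boldsymbol z\in\mathcal Z$, the positive integer-valued variables $\tau_k$, $k\ge1$, are conditionally independent and have the same conditional distribution given $\boldsymbol Z=\boldsymbol z$. Then: (a) for every integer $k\ge1$, $\boldsymbol z\in\mathcal Z$, $i_{k-1},\dots,i_1\in\mathcal S$, $\ell'_k,\dots,\ell'_1\in\mathbb N^*$, and all $i,j\in\mathcal S$, $\ell\in\mathbb N^*$, $$\mathbb P(Y_{k+1}=j,\tau_{k+1}=\ell\mid Y_k=i,\tau_k=\ell'_k,Y_{k-1}=i_{k-1},\tau_{k-1}=\ell'_{k-1},\dots,Y_1=i_1,\tau_1=\ell'_1,\boldsymbol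 Z=\boldsymbol z)=\mathbb P(Y_{k+1}=j,\tau_{k+1}=\ell\mid Y_k=i,\boldsymbol Z=\boldsymbol z);$$ (b) for every $\boldsymbol z\in\mathcal Z$, all integers $t<t'$, all $k\in\mathbb N$ and $i,j\in\mathcal S$, $$\mathbb P(X_{T_{k+1}}=j\mid X_{T_k}=i,T_{k+1}=t',T_k=t,\boldsymbol Z=\boldsymbol z)=\big(\boldsymbol P^{t'-t}(\boldsymbol z)\big)_{ij};$$ (c) for every $\boldsymbol z\in\mathcal Z$, the conditional distribution of $\tau_{k+1}$ given $Y_k$ and $\boldsymbol Z=\boldsymbol z$ is the same for all $k\in\mathbb N$.
   Context: $\boldsymbol P^{m}(\boldsymbol z)$ denotes the $m$-th matrix power of $\boldsymbol P(\boldsymbol z)$. Conditional probabilities given $\boldsymbol Z=\boldsymbol z$ are understood for $\boldsymbol z$ in the support of $\boldsymbol Z$. *)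

From HB Require Import structures.
From mathcomp Require Import all_boot all_order all_algebra.
From mathcomp Require Import all_classical all_reals all_analysis.
Set Implicit Arguments. Unset Strict Implicit. Unset Printing Implicit Defensive.
Import Order.TTheory GRing.Theory Num.Theory.
Local Open Scope classical_set_scope.
Local Open Scope ring_scope.

Section Defs.
Context {R : realType} {d : measure_display} {Omega : measurableType d}.

Definition Pr (mu : probability Omega R) (A : set Omega) : R := fine (mu A).

(* elementary conditional probability P(A | B) = P(A /\ B) / P(B)
   (only used when P(B) > 0) *)
Definition cprob (mu : probability Omega R) (A B : set Omega) : R :=
  Pr mu (A `&` B) / Pr mu B.

Definition stochastic_mx (N : nat) (M : 'M[R]_N.+1) : Prop :=
  (forall i j, 0 <= M i j) /\ (forall i, \sum_j M i j = 1).

Definition irreducible_mx (N : nat) (M : 'M[R]_N.+1) : Prop :=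
  forall i j, exists m : nat, 0 < (M ^+ m) i j.

(* aperiodic: for every state i, gcd {m >= 1 | (M^m)_{ii} > 0} = 1 *)
Definition aperiodic_mx (N : nat) (M : 'M[R]_N.+1) : Prop :=
  forall i (q : nat),
    (forall m : nat, (0 < m)%N -> 0 < (M ^+ m) i i -> (q %| m)%N) -> q = 1%N.

Definition hom_markov_chain (N : nat) (mu : probability Omega R)
  (X : nat -> Omega -> 'I_N.+1) (M : 'M[R]_N.+1) : Prop :=
  stochastic_mx M /\
  (forall (t : nat) (i j : 'I_N.+1),
     0 < Pr mu [set w | X t w = i] ->
     cprob mu [set w | X t.+1 w = j] [set w | X t w = i] = M i j) /\
  (forall (t : nat) (h : nat -> 'I_N.+1) (i j : 'I_N.+1),
     0 < Pr mu [set w | X t w = i /\ forall s, (s < t)%N -> X s w = h s] ->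
     cprob mu [set w | X t.+1 w = j]
              [set w | X t w = i /\ forall s, (s < t)%N -> X s w = h s]
     = cprob mu [set w | X t.+1 w = j] [set w | X t w = i]).

Definition gap (T : nat -> Omega -> nat) (k : nat) (w : Omega) : nat :=
  (T k w - T k.-1 w)%N.

Definition obs (N : nat) (X : nat -> Omega -> 'I_N.+1) (T : nat -> Omega -> nat)
  (k : nat) (w : Omega) : 'I_N.+1 := X (T k w) w.

Definition indep_gaps_process (N : nat) (mu : probability Omega R)
  (X : nat -> Omega -> 'I_N.+1) (tau : nat -> Omega -> nat) : Prop :=
  forall (ts ks : seq nat) (h : nat -> 'I_N.+1) (l : nat -> nat),
    all (fun k => (0 < k)%N) ks ->
    Pr mu [set w | (forall t, t \in ts -> X t w = h t) /\
                   (forall k, k \in ks -> tau k w = l k)]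
    = Pr mu [set w | forall t, t \in ts -> X t w = h t] *
      Pr mu [set w | forall k, k \in ks -> tau k w = l k].

Definition mutually_indep_gaps (mu : probability Omega R)
  (tau : nat -> Omega -> nat) : Prop :=
  forall (ks : seq nat) (l : nat -> nat),
    uniq ks -> all (fun k => (0 < k)%N) ks ->
    Pr mu [set w | forall k, k \in ks -> tau k w = l k]
    = \prod_(k <- ks) Pr mu [set w | tau k w = l k].

Definition ident_distr_gaps (mu : probability Omega R)
  (tau : nat -> Omega -> nat) : Prop :=
  forall (k l : nat), (0 < k)%N ->
    Pr mu [set w | tau k w = l] = Pr mu [set w | tau 1%N w = l].

End Defs.

From HB Require Import structures.
From mathcomp Require Import all_boot all_order all_algebra.
From mathcomp Require Import all_classical all_reals all_analysis.
From mathcomp Require Import ring.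
Import Order.TTheory GRing.Theory Num.Theory.
Local Open Scope classical_set_scope.
Local Open Scope ring_scope.

(** Once the gaps tau_1, ..., tau_k are fixed to values l_1, ..., l_k, the
  observation times T_m = t0 + l_1 + ... + l_m (m <= k) are deterministic.
  On such a gap history every event of the statement is a cylinder event of X
  intersected with an event on the gaps; independence of X and the gaps
  factorises its probability, the Markov property evaluates the cylinder
  probability (the last observation adds a factor (P^l)_ij after l steps), and
  mutual independence of the gaps splits off tau_(k+1).  The resulting factor
  does not depend on the gap history, so summing over the countably many gap
  histories gives the same proportionality for the unconditioned events. *)

Section Probability.
Context {R : realType} {d : measure_display} {Omega : measurableType d}.
Variable mu : probability Omega R.

Lemma PrE A : measurable A -> mu A = (Pr mu A)%:E.
Proof. by move=> mA; rewrite /Pr fineK // fin_num_measure. Qed.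

Lemma Pr_ge0 A : 0 <= Pr mu A.
Proof. exact/fine_ge0/measure_ge0. Qed.

Lemma Pr_set0 : Pr mu set0 = 0.
Proof. by rewrite /Pr measure0. Qed.

Lemma le_Pr A B : measurable A -> measurable B -> A `<=` B -> Pr mu A <= Pr mu B.
Proof.
by move=> mA mB AB; rewrite -lee_fin -!PrE //; apply: le_measure; rewrite ?inE.
Qed.

Lemma cprobE {A C c} :
  0 < Pr mu C -> Pr mu (A `&` C) = c * Pr mu C -> cprob mu A C = c.
Proof. by move=> C_gt0 ACc; rewrite /cprob ACc mulfK // gt_eqF. Qed.

Lemma Pr_proportional_fibers (K : countType) (f : Omega -> K) A B c :
  0 <= c -> measurable A -> measurable B ->
  (forall x, measurable [set w | f w = x]) ->
  (forall x, Pr mu (A `&` [set w | f w = x]) = c * Pr mu (B `&` [set w | f w = x])) ->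
  Pr mu A = c * Pr mu B.
Proof.
move=> c_ge0 mA mB mf eqAB.
pose F (C : set Omega) m := C `&` [set w | pickle (f w) = m].
have FE C m : F C m = if pickle_inv m is Some x then C `&` [set w | f w = x] else set0.
  rewrite /F; apply/seteqP; split=> w /=.
    by case=> Cw <-; rewrite pickleK_inv.
  case E: (pickle_inv m) => [x|] //= [Cw fx].
  by split=> //; rewrite fx -(@pickle_invK K m) E.
have mF C m : measurable C -> measurable (F C m).
  by move=> mC; rewrite FE; case: (pickle_inv m) => [x|] //; exact: measurableI.
have muE C : measurable C -> mu C = (\sum_(0 <= m <oo | m \in setT) mu (F C m))%E.
  move=> mC; rewrite -measure_bigcup //; last first.
  - by move=> m n _ _ [w [[_ <-] [_ <-]]].
  - by move=> m _; exact: mF.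
  congr (mu _); apply/seteqP; split=> [w Cw|w [m _ []] //].
  by exists (pickle (f w)).
suff muA : mu A = (c%:E * mu B)%E by rewrite /Pr muA fineM // fin_num_measure.
rewrite !muE // -nneseriesZl //; apply: eq_eseriesr => m _.
by rewrite !FE; case: (pickle_inv m) => [x|]; rewrite ?measure0 ?mule0 // !PrE ?eqAB //;
  exact: measurableI.
Qed.

Lemma Pr_sum_fibers n (g : Omega -> 'I_n) A :
  measurable A -> (forall i, measurable [set w | g w = i]) ->
  Pr mu A = \sum_(i < n) Pr mu (A `&` [set w | g w = i]).
Proof.
move=> mA mg.
have A_eq : A = \big[setU/set0]_(i < n) (A `&` [set w | g w = i]).
  apply/seteqP; split=> [w Aw|w]; first by rewrite (bigD1 (g w)) //=; left.
  by elim/big_rec: _ => // i S _ IH [[]|].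
rewrite {1}/Pr {1}A_eq measure_bigsetU_ord; last 2 first.
- by move=> i; exact: measurableI.
- by move=> i j _ _ [w [[_ <-] [_ <-]]].
rewrite (eq_bigr (fun i => (Pr mu (A `&` [set w | g w = i]))%:E)) ?sumEFin //.
by move=> i _; rewrite -PrE //; exact: measurableI.
Qed.

End Probability.

Lemma mxpow_ge0 {R : numDomainType} n (M : 'M[R]_n.+1) :
  (forall i j, 0 <= M i j) -> forall m i j, 0 <= (M ^+ m) i j.
Proof.
move=> M_ge0; elim=> [|m IH] i j; first by rewrite expr0 mxE; case: eqP.
by rewrite exprSr mxE; apply: sumr_ge0 => k _; exact: mulr_ge0.
Qed.

Definition cylinder {T : Type} {K : eqType} (Y : nat -> T -> K) (cs : seq (nat * K)) :
    set T :=
  [set w | forall p, p \in cs -> Y p.1 w = p.2].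

Section Measurability.
Context {d : measure_display} {Omega : measurableType d}.

Lemma measurable_natrel (f g : Omega -> nat) (P : nat -> nat -> Prop) :
  (forall a, measurable [set w | f w = a]) -> (forall b, measurable [set w | g w = b]) ->
  measurable [set w | P (f w) (g w)].
Proof.
move=> mf mg.
have -> : [set w | P (f w) (g w)] = \bigcup_(a in setT) \bigcup_(b in setT)
    (if pselect (P a b) then [set w | f w = a] `&` [set w | g w = b] else set0).
  apply/seteqP; split=> w /=.
    by move=> Pw; exists (f w) => //; exists (g w) => //; case: pselect.
  by case=> a _ [b _]; case: pselect => //= Pab [-> ->].
apply: bigcup_measurable => a _; apply: bigcup_measurable => b _.
by case: pselect => Pab; [exact: measurableI | exact: measurable0].
Qed.

Lemma measurable_at_time (K : Type) (Y : nat -> Omega -> K) (f : Omega -> nat) y :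
  (forall t, measurable [set w | Y t w = y]) -> (forall t, measurable [set w | f w = t]) ->
  measurable [set w | Y (f w) w = y].
Proof.
move=> mY mf.
have -> : [set w | Y (f w) w = y] =
          \bigcup_(t in setT) ([set w | f w = t] `&` [set w | Y t w = y]).
  by apply/seteqP; split=> [w Yw|w [t _ [<-]]] //; exists (f w).
by apply: bigcup_measurable => t _; exact: measurableI.
Qed.

Context {K : eqType} {Y : nat -> Omega -> K}.
Hypothesis measY : forall t y, measurable [set w | Y t w = y].

Lemma measurable_map_eq ts x : measurable [set w | [seq Y s w | s <- ts] = x].
Proof.
elim: ts x => [|t ts IH] [|y x] /=.
- have -> : [set w : Omega | [::] = [::] :> seq K] = setT by apply/seteqP; split.
  exact: measurableT.
- have -> : [set w : Omega | [::] = y :: x] = set0 by apply/seteqP; split.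
  exact: measurable0.
- have -> : [set w | Y t w :: [seq Y s w | s <- ts] = [::]] = set0 by apply/seteqP; split.
  exact: measurable0.
have -> : [set w | Y t w :: [seq Y s w | s <- ts] = y :: x] =
          [set w | Y t w = y] `&` [set w | [seq Y s w | s <- ts] = x].
  by apply/seteqP; split=> w /=; [case=> -> -> | case=> -> ->].
exact: measurableI.
Qed.

Lemma cylinder_cons p cs : cylinder Y (p :: cs) = [set w | Y p.1 w = p.2] `&` cylinder Y cs.
Proof.
apply/seteqP; split=> w /=.
  by move=> Yw; split=> [|q q_cs]; apply: Yw; rewrite inE ?q_cs ?orbT ?eqxx.
by move=> [Yp Yw] q; rewrite inE => /orP[/eqP -> //|]; exact: Yw.
Qed.

Lemma map_eq_set0 ts x : size x != size ts -> [set w | [seq Y s w | s <- ts] = x] = set0.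
Proof.
by move=> x_ts; apply/seteqP; split=> w // Yw; move: x_ts; rewrite -Yw size_map eqxx.
Qed.

Lemma cylinder_path_fiber {u a cs x} :
  (u, a) \in cs -> all (fun p => p.1 <= u)%N cs -> size x = u ->
  let g s := if (s < u)%N then nth a x s else a in
  cylinder Y cs `&` [set w | [seq Y s w | s <- iota 0 u] = x] =
  if all (fun p => g p.1 == p.2) cs
  then [set w | Y u w = a /\ forall s, (s < u)%N -> Y s w = g s] else set0.
Proof.
move=> ua_cs cs_le x_u g; set F := [set w | _ = x].
have Yg w : F w -> Y u w = a -> forall s, (s <= u)%N -> Y s w = g s.
  move=> Fw Yu s; rewrite /g; case: ltnP => [s_lt _ | u_le s_le].
    by rewrite -Fw (nth_map 0%N) ?size_iota // nth_iota.
  by have -> : s = u by apply/eqP; rewrite eqn_leq s_le u_le.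
case: ifPn => [cs_g|cs_g]; apply/seteqP; split=> w //.
- move=> [Yw Fw]; have Yu : Y u w = a := Yw _ ua_cs.
  by split=> // s s_lt; exact: Yg Fw Yu s (ltnW s_lt).
- move=> [Yu Yh]; have Yg' s : (s <= u)%N -> Y s w = g s.
    by rewrite leq_eqVlt => /orP[/eqP -> | ]; [rewrite /g ltnn | exact: Yh].
  split=> [p p_cs|].
    by move/eqP: (allP cs_g p p_cs) => <-; apply: Yg'; exact: (allP cs_le p p_cs).
  apply: (@eq_from_nth _ a); first by rewrite size_map size_iota x_u.
  move=> s; rewrite size_map size_iota => s_lt.
  by rewrite (nth_map 0%N) ?size_iota // nth_iota // add0n Yh // /g s_lt.
- move=> [Yw Fw]; have Yu := Yw _ ua_cs.
  move/negP: cs_g; apply; apply/allP => p p_cs; apply/eqP.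
  by rewrite -(Yw p p_cs) (Yg w Fw Yu p.1 (allP cs_le p p_cs)).
Qed.

Lemma cylinder_nil : cylinder Y [::] = setT.
Proof. by apply/seteqP; split. Qed.

Lemma cylinder_cat cs cs' : cylinder Y (cs ++ cs') = cylinder Y cs `&` cylinder Y cs'.
Proof.
by elim: cs => [|p cs IH] /=; rewrite ?cylinder_nil ?setTI // !cylinder_cons IH setIA.
Qed.

Lemma measurable_cylinder cs : measurable (cylinder Y cs).
Proof.
elim: cs => [|p cs IH]; last by rewrite cylinder_cons; exact: measurableI.
by rewrite cylinder_nil; exact: measurableT.
Qed.

End Measurability.

Section MarkovCylinder.
Context {R : realType} {d : measure_display} {Omega : measurableType d}.
Context {mu : probability Omega R} {N : nat} {X : nat -> Omega -> 'I_N.+1}.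
Context {M : 'M[R]_N.+1}.
Hypothesis measX : forall t i, measurable [set w | X t w = i].
Hypothesis hMC : hom_markov_chain mu X M.

Lemma Pr_markov_step u a j (h : nat -> 'I_N.+1) :
  let H := [set w | X u w = a /\ forall s, (s < u)%N -> X s w = h s] in
  Pr mu ([set w | X u.+1 w = j] `&` H) = M a j * Pr mu H.
Proof.
move=> H; have mH : measurable H.
  have -> : H = cylinder X ((u, a) :: [seq (s, h s) | s <- iota 0 u]).
    apply/seteqP; split=> w /=.
      case=> Xu Xh p; rewrite inE => /orP[/eqP -> // | /mapP[s]].
      by rewrite mem_iota => /andP[_ s_lt] -> /=; exact: Xh.
    move=> Xw; split=> [|s s_lt]; first by apply: (Xw (u, a)); rewrite inE eqxx.
    by apply: (Xw (s, h s)); rewrite inE map_f ?orbT // mem_iota s_lt.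
  exact: measurable_cylinder.
case: hMC => _ [MC1 MCh].
have [H_gt0|H_le0] := ltrP 0 (Pr mu H).
  have a_gt0 : 0 < Pr mu [set w | X u w = a].
    by apply: lt_le_trans H_gt0 _; apply: le_Pr => // w [].
  by move: (MCh u h a j H_gt0); rewrite MC1 // /cprob => <-; rewrite divfK // gt_eqF.
have H0 : Pr mu H = 0 by apply/eqP; rewrite eq_le H_le0 Pr_ge0.
rewrite H0 mulr0; apply/eqP; rewrite eq_le Pr_ge0 andbT -H0.
by apply: le_Pr => //; exact: measurableI.
Qed.

(* Decompose along the whole past (X_0, ..., X_(u-1)): on each such path the
   cylinder is either empty or a history event, where the Markov property applies. *)
Lemma Pr_cylinder_step u a j cs :
  (u, a) \in cs -> all (fun p => p.1 <= u)%N cs ->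
  Pr mu (cylinder X ((u.+1, j) :: cs)) = Pr mu (cylinder X cs) * M a j.
Proof.
move=> ua_cs cs_le; rewrite mulrC.
have [[M_ge0 _] _] := hMC.
apply: (Pr_proportional_fibers mu _ (fun w => [seq X s w | s <- iota 0 u])) => //;
  try exact: measurable_cylinder; first exact: measurable_map_eq.
move=> x; have [x_u|x_u] := eqVneq (size x) u; last first.
  by rewrite map_eq_set0 ?size_iota // !setI0 Pr_set0 mulr0.
rewrite cylinder_cons -setIA (cylinder_path_fiber ua_cs cs_le x_u).
by case: ifP => _; [exact: Pr_markov_step | rewrite setI0 Pr_set0 mulr0].
Qed.

Lemma Pr_cylinder_steps t i j n cs :
  (t, i) \in cs -> all (fun p => p.1 <= t)%N cs ->
  Pr mu (cylinder X (((t + n)%N, j) :: cs)) = Pr mu (cylinder X cs) * (M ^+ n) i j.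
Proof.
move=> ti_cs cs_le; elim: n j => [|n IH] j.
  rewrite addn0 expr0 mxE cylinder_cons.
  have [<-|ij] := eqVneq i j.
    by rewrite mulr1 setIidr // => w Xw; exact: (Xw _ ti_cs).
  rewrite mulr0 -(Pr_set0 mu); congr Pr; apply/seteqP; split=> // w [/= Xj Xw].
  by move: ij; rewrite -Xj (Xw _ ti_cs) eqxx.
rewrite (Pr_sum_fibers mu _ (X (t + n)%N)) //; last exact: measurable_cylinder.
rewrite exprSr mxE mulr_sumr; apply: eq_bigr => a _.
have -> : cylinder X (((t + n.+1)%N, j) :: cs) `&` [set w | X (t + n)%N w = a] =
          cylinder X (((t + n)%N.+1, j) :: ((t + n)%N, a) :: cs).
  by rewrite !cylinder_cons addnS -setIA [cylinder X cs `&` _]setIC.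
rewrite (@Pr_cylinder_step _ a) ?inE ?eqxx // ?IH ?mulrA //=.
by rewrite leqnn; apply/allP => p /(allP cs_le) /leq_trans; apply; exact: leq_addr.
Qed.

End MarkovCylinder.

Definition gap_event {d : measure_display} {Omega : measurableType d}
    (T : nat -> Omega -> nat) (ks : seq nat) (l : nat -> nat) : set Omega :=
  [set w | forall k, k \in ks -> gap T k w = l k].

Definition gap_history {d : measure_display} {Omega : measurableType d}
    (T : nat -> Omega -> nat) (k : nat) (w : Omega) : seq nat :=
  [seq gap T m w | m <- iota 1 k].

Definition time_of_gaps (t0 : nat) (l : nat -> nat) (m : nat) : nat :=
  (t0 + \sum_(1 <= n < m.+1) l n)%N.

Lemma leq_time_of_gaps t0 l m m' :
  (m <= m')%N -> (time_of_gaps t0 l m <= time_of_gaps t0 l m')%N.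
Proof.
by move=> le_mm'; rewrite leq_add2l [X in (_ <= X)%N](big_cat_nat (n := m.+1)) //= leq_addr.
Qed.

Lemma notin_iota_succ k : k.+1 \notin iota 1 k.
Proof. by rewrite mem_iota add1n ltnn andbF. Qed.

Lemma all_iota_gt0 k : all (fun m => 0 < m)%N (iota 1 k).
Proof. by apply/allP => m; rewrite mem_iota => /andP[]. Qed.

Section Gaps.
Context {d : measure_display} {Omega : measurableType d}.
Context {T : nat -> Omega -> nat} {t0 : nat}.
Hypothesis measT : forall k t, measurable [set w | T k w = t].
Hypothesis hT0 : forall w, T 0%N w = t0.
Hypothesis hTinc : forall k w, (T k w < T k.+1 w)%N.

Lemma measurable_gap k v : measurable [set w | gap T k w = v].
Proof. exact: (measurable_natrel _ _ (fun a b => (a - b)%N = v)). Qed.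

Lemma measurable_gap_event ks l : measurable (gap_event T ks l).
Proof.
have -> : gap_event T ks l = cylinder (gap T) [seq (k, l k) | k <- ks].
  apply/seteqP; split=> w Tw.
    by move=> _ /mapP[k k_ks ->]; exact: Tw.
  by move=> k k_ks; apply: (Tw (k, l k)); exact: map_f.
by apply: measurable_cylinder => k v; exact: measurable_gap.
Qed.

Lemma measurable_gap_history k x : measurable [set w | gap_history T k w = x].
Proof. by apply: measurable_map_eq => m v; exact: measurable_gap. Qed.

Lemma T_succ k w : T k.+1 w = (T k w + gap T k.+1 w)%N.
Proof. by rewrite /gap subnKC // ltnW. Qed.

Lemma T_on_gap_event {k l w m} :
  gap_event T (iota 1 k) l w -> (m <= k)%N -> T m w = time_of_gaps t0 l m.
Proof.
move=> Tw; elim: m => [_|m IH m_lt]; first by rewrite hT0 /time_of_gaps big_geq ?addn0.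
rewrite T_succ IH ?(ltnW m_lt) // Tw ?mem_iota ?add1n //.
by rewrite /time_of_gaps [in RHS]big_nat_recr //= addnA.
Qed.

Lemma gap_event_succ k l v :
  gap_event T (k.+1 :: iota 1 k) [eta l with k.+1 |-> v] =
  [set w | gap T k.+1 w = v] `&` gap_event T (iota 1 k) l.
Proof.
have l_out m : m \in iota 1 k -> [eta l with k.+1 |-> v] m = l m.
  by move=> m_in /=; case: eqP => // m_eq; move: (notin_iota_succ k); rewrite -m_eq m_in.
apply/seteqP; split=> w Tw.
  split=> [|m m_in] /=; first by rewrite (Tw k.+1) ?inE ?eqxx //= eqxx.
  by rewrite -l_out // Tw // inE m_in orbT.
move=> m; rewrite inE => /orP[/eqP -> | m_in]; first by rewrite /= eqxx; case: Tw.
by rewrite l_out //; case: Tw => _; exact.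
Qed.

End Gaps.

Section ObservedChain.
Context {R : realType} {d : measure_display} {Omega : measurableType d}.
Context {mu : probability Omega R} {N : nat} {X : nat -> Omega -> 'I_N.+1}.
Context {M : 'M[R]_N.+1} {T : nat -> Omega -> nat} {t0 : nat}.
Hypothesis measX : forall t i, measurable [set w | X t w = i].
Hypothesis measT : forall k t, measurable [set w | T k w = t].
Hypothesis hMC : hom_markov_chain mu X M.
Hypothesis hT0 : forall w, T 0%N w = t0.
Hypothesis hTinc : forall k w, (T k w < T k.+1 w)%N.
Hypothesis hindX : indep_gaps_process mu X (gap T).
Hypothesis hindtau : mutually_indep_gaps mu (gap T).
Hypothesis hidtau : ident_distr_gaps mu (gap T).

Lemma measurable_obs k i : measurable [set w | obs X T k w = i].
Proof. exact: (measurable_at_time _ X (T k) i (measX ^~ i) (measT k)). Qed.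

Lemma Pr_proportional_gap_histories k A B c :
  0 <= c -> measurable A -> measurable B ->
  (forall l, Pr mu (A `&` gap_event T (iota 1 k) l) =
             c * Pr mu (B `&` gap_event T (iota 1 k) l)) ->
  Pr mu A = c * Pr mu B.
Proof.
move=> c_ge0 mA mB eqAB.
apply: (Pr_proportional_fibers mu _ (gap_history T k)) => // [x|x].
  exact: measurable_gap_history.
have [x_k|x_k] := eqVneq (size x) k; last first.
  by rewrite /gap_history map_eq_set0 ?size_iota // !setI0 Pr_set0 mulr0.
suff -> : [set w | gap_history T k w = x] =
          gap_event T (iota 1 k) (fun m => nth 0%N x m.-1).
  exact: eqAB.
apply/seteqP; split=> w Tw.
  move=> m; rewrite mem_iota add1n ltnS => /andP[m_gt0 m_le].
  have m_lt : (m.-1 < k)%N by rewrite prednK.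
  by rewrite -Tw (nth_map 0%N) ?size_iota // nth_iota // add1n prednK.
apply: (@eq_from_nth _ 0%N); first by rewrite size_map size_iota x_k.
move=> m; rewrite size_map size_iota => m_lt.
by rewrite (nth_map 0%N) ?size_iota // nth_iota // Tw // mem_iota leq_addr add1n.
Qed.

Lemma Pr_cylinder_gap_event cs ks l : all (fun k => 0 < k)%N ks ->
  Pr mu (cylinder X cs `&` gap_event T ks l) =
  Pr mu (cylinder X cs) * Pr mu (gap_event T ks l).
Proof.
move=> ks_gt0.
have [[h h_cs]|no_h] :=
  pselect (exists h : nat -> 'I_N.+1, forall p, p \in cs -> h p.1 = p.2).
  have -> : cylinder X cs = [set w | forall t, t \in [seq p.1 | p <- cs] -> X t w = h t].
    apply/seteqP; split=> w Xw; last by move=> p p_cs; rewrite Xw ?h_cs ?map_f.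
    by move=> _ /mapP[p p_cs ->]; rewrite Xw ?h_cs.
  exact: hindX.
have -> : cylinder X cs = set0.
  by apply/seteqP; split=> w // Xw; apply: no_h; exists (X ^~ w).
by rewrite set0I Pr_set0 mul0r.
Qed.

Lemma Pr_gap_event_succ k l v :
  Pr mu (gap_event T (k.+1 :: iota 1 k) [eta l with k.+1 |-> v]) =
  Pr mu [set w | gap T k.+1 w = v] * Pr mu (gap_event T (iota 1 k) l).
Proof.
have ks_gt0 : all (fun m => 0 < m)%N (k.+1 :: iota 1 k) by rewrite /= all_iota_gt0.
have ks_uniq : uniq (k.+1 :: iota 1 k) by rewrite cons_uniq notin_iota_succ iota_uniq.
rewrite /gap_event !hindtau ?all_iota_gt0 ?iota_uniq // big_cons /= eqxx.
congr (_ * _); apply: eq_big_seq => m m_in.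
by case: eqP => // m_eq; move: (notin_iota_succ k); rewrite -m_eq m_in.
Qed.

Lemma obs_on_gap_event {k l w m} :
  gap_event T (iota 1 k) l w -> (m <= k)%N -> obs X T m w = X (time_of_gaps t0 l m) w.
Proof. by move=> Tw m_le; rewrite /obs (T_on_gap_event hT0 hTinc Tw m_le). Qed.

Lemma obs_gap_event k l i :
  [set w | obs X T k w = i] `&` gap_event T (iota 1 k) l =
  cylinder X [:: (time_of_gaps t0 l k, i)] `&` gap_event T (iota 1 k) l.
Proof.
apply/seteqP; split=> w [Xw Tw]; split=> //.
  by move=> p; rewrite inE => /eqP -> /=; rewrite -(obs_on_gap_event Tw).
by rewrite /= (obs_on_gap_event Tw) //; exact: Xw (mem_head _ _).
Qed.

Lemma Pr_next_obs_cylinder k l cs i j v :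
  let s := time_of_gaps t0 l k in
  (s, i) \in cs -> all (fun p => p.1 <= s)%N cs ->
  Pr mu ([set w | obs X T k.+1 w = j /\ gap T k.+1 w = v] `&`
         (cylinder X cs `&` gap_event T (iota 1 k) l))
  = (M ^+ v) i j * Pr mu [set w | gap T k.+1 w = v] *
    Pr mu (cylinder X cs `&` gap_event T (iota 1 k) l).
Proof.
move=> s si_cs cs_le.
have -> : [set w | obs X T k.+1 w = j /\ gap T k.+1 w = v] `&`
          (cylinder X cs `&` gap_event T (iota 1 k) l) =
          cylinder X (((s + v)%N, j) :: cs) `&`
          gap_event T (k.+1 :: iota 1 k) [eta l with k.+1 |-> v].
  rewrite gap_event_succ cylinder_cons; apply/seteqP; split=> w.
    move=> [[Yj gv] [Xw Tw]]; split; split=> //=.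
    by rewrite -Yj /obs (T_succ hTinc) gv (T_on_gap_event hT0 hTinc Tw).
  move=> [[/= Xj Xw] [gv Tw]]; split; split=> //.
  by rewrite /obs (T_succ hTinc) gv (T_on_gap_event hT0 hTinc Tw).
rewrite !Pr_cylinder_gap_event ?all_iota_gt0 //= ?all_iota_gt0 //.
rewrite Pr_gap_event_succ (Pr_cylinder_steps measX hMC _ i) //.
by ring.
Qed.

Definition obs_history k (h : nat -> 'I_N.+1) (l : nat -> nat) i : set Omega :=
  [set w | obs X T k w = i /\
           (forall m, (1 <= m < k)%N -> obs X T m w = h m) /\
           (forall m, (1 <= m <= k)%N -> gap T m w = l m)].

Lemma obs_historyE k h l i : (1 <= k)%N ->
  obs_history k h l i =
  cylinder X ((time_of_gaps t0 l k, i) ::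
              [seq (time_of_gaps t0 l m, h m) | m <- iota 1 k.-1])
  `&` gap_event T (iota 1 k) l.
Proof.
move=> k_ge1; apply/seteqP; split=> w.
  move=> [Yk [Yh Tl]].
  have Tw : gap_event T (iota 1 k) l w.
    by move=> m; rewrite mem_iota add1n ltnS; exact: Tl.
  split=> // p; rewrite inE => /orP[/eqP -> /= | /mapP[m]].
    by rewrite -(obs_on_gap_event Tw).
  rewrite mem_iota add1n prednK // => /andP[m_ge1 m_lt] -> /=.
  by rewrite -(obs_on_gap_event Tw (ltnW m_lt)) Yh // m_ge1.
move=> [Xw Tw]; split; last split.
- by rewrite (obs_on_gap_event Tw) //; exact: (Xw (_, i) (mem_head _ _)).
- move=> m /andP[m_ge1 m_lt]; rewrite (obs_on_gap_event Tw (ltnW m_lt)).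
  by apply: (Xw (_, h m)); rewrite inE map_f ?orbT // mem_iota m_ge1 add1n prednK.
- by move=> m /andP[m_ge1 m_le]; apply: Tw; rewrite mem_iota m_ge1 add1n ltnS.
Qed.

Lemma measurable_obs_history k h l i : (1 <= k)%N -> measurable (obs_history k h l i).
Proof.
move=> k_ge1; rewrite obs_historyE //.
exact: measurableI (measurable_cylinder measX _) (measurable_gap_event measT _ _).
Qed.

Lemma Pr_next_obs_history k h l i j v : (1 <= k)%N ->
  Pr mu ([set w | obs X T k.+1 w = j /\ gap T k.+1 w = v] `&` obs_history k h l i)
  = (M ^+ v) i j * Pr mu [set w | gap T k.+1 w = v] * Pr mu (obs_history k h l i).
Proof.
move=> k_ge1; rewrite obs_historyE //; apply: Pr_next_obs_cylinder; first exact: mem_head.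
rewrite /= leqnn; apply/allP => p /mapP[m]; rewrite mem_iota add1n prednK //.
by move=> /andP[_ m_lt] ->; exact/leq_time_of_gaps/ltnW.
Qed.

Lemma Pr_next_obs k i j v :
  Pr mu ([set w | obs X T k.+1 w = j /\ gap T k.+1 w = v] `&` [set w | obs X T k w = i])
  = (M ^+ v) i j * Pr mu [set w | gap T k.+1 w = v] * Pr mu [set w | obs X T k w = i].
Proof.
have [[M_ge0 _] _] := hMC.
apply: (Pr_proportional_gap_histories k).
- by apply: mulr_ge0 (Pr_ge0 _ _); exact: mxpow_ge0.
- apply: measurableI (measurable_obs _ _).
  exact: measurableI (measurable_obs _ _) (measurable_gap measT _ _).
- exact: measurable_obs.
move=> l; rewrite -setIA !obs_gap_event.
by apply: Pr_next_obs_cylinder; rewrite ?mem_head //= leqnn.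
Qed.

Lemma Pr_gap_obs k i v :
  Pr mu ([set w | gap T k.+1 w = v] `&` [set w | obs X T k w = i])
  = Pr mu [set w | gap T 1%N w = v] * Pr mu [set w | obs X T k w = i].
Proof.
rewrite -(hidtau k.+1 v) //; apply: (Pr_proportional_gap_histories k).
- exact: Pr_ge0.
- exact: measurableI (measurable_gap measT _ _) (measurable_obs _ _).
- exact: measurable_obs.
move=> l; rewrite -setIA !obs_gap_event setICA -gap_event_succ.
rewrite !Pr_cylinder_gap_event ?all_iota_gt0 //= ?all_iota_gt0 //.
by rewrite Pr_gap_event_succ mulrCA.
Qed.

Lemma obs_times_gap_event k l t t' i :
  let G := gap_event T (iota 1 k.+1) l in
  [set w | X (T k w) w = i /\ T k.+1 w = t' /\ T k w = t] `&` G =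
  if (time_of_gaps t0 l k == t) && (time_of_gaps t0 l k.+1 == t')
  then cylinder X [:: (t, i)] `&` G else set0.
Proof.
move=> G.
have TG w : G w -> T k w = time_of_gaps t0 l k /\ T k.+1 w = time_of_gaps t0 l k.+1.
  by move=> Gw; rewrite !(T_on_gap_event hT0 hTinc Gw) ?leqnSn.
case: ifPn => [/andP[/eqP s_t /eqP s_t'] | st_ne]; apply/seteqP; split=> w //.
- move=> [[Xi [_ Tk]] Gw]; split=> // p; rewrite inE => /eqP -> /=.
  by rewrite -Tk.
- move=> [Xw Gw]; have [Tk Tk1] := TG w Gw; split=> //=.
  by rewrite Tk Tk1 s_t s_t'; split=> //; exact: (Xw (t, i) (mem_head _ _)).
- move=> [[_ [Tk1 Tk]] /TG[Tk' Tk1']].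
  by move: st_ne; rewrite -Tk -Tk1 Tk' Tk1' !eqxx.
Qed.

Lemma Pr_obs_jump k t t' i j : (t < t')%N ->
  let C := [set w | X (T k w) w = i /\ T k.+1 w = t' /\ T k w = t] in
  Pr mu ([set w | X (T k.+1 w) w = j] `&` C) = (M ^+ (t' - t)) i j * Pr mu C.
Proof.
move=> lt_tt' C; have [[M_ge0 _] _] := hMC.
have mC : measurable C.
  have -> : C = [set w | obs X T k w = i] `&`
                ([set w | T k.+1 w = t'] `&` [set w | T k w = t]).
    by apply/seteqP; split=> w.
  exact: measurableI (measurable_obs _ _) (measurableI _ _ (measT _ _) (measT _ _)).
apply: (Pr_proportional_gap_histories k.+1); first exact: mxpow_ge0.
- by apply: measurableI mC; exact: measurable_obs.
- exact: mC.
move=> l; rewrite setIAC (obs_gap_event k.+1) -setIA [_ `&` C]setIC obs_times_gap_event.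
case: ifP => [/andP[_ /eqP ->]|_]; last by rewrite !setI0 Pr_set0 mulr0.
rewrite setIA -cylinder_cat -[X in cylinder _ [:: (X, _); _]](subnKC (ltnW lt_tt')).
rewrite !Pr_cylinder_gap_event ?all_iota_gt0 //.
by rewrite (Pr_cylinder_steps measX hMC _ i) ?mem_head //= ?leqnn //; ring.
Qed.

End ObservedChain.

Theorem lemma1 (R : realType) (d : measure_display) (Omega : measurableType d)
  (Zt : Type) (Pz : Zt -> probability Omega R)
  (N : nat) (X : nat -> Omega -> 'I_N.+1) (P : Zt -> 'M[R]_N.+1)
  (T : nat -> Omega -> nat) (t0 : nat)
  (measX : forall t i, measurable [set w | X t w = i])
  (measT : forall k t, measurable [set w | T k w = t])
  (hMC : forall z, hom_markov_chain (Pz z) X (P z))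
  (hirr : forall z, irreducible_mx (P z))
  (haper : forall z, aperiodic_mx (P z))
  (hT0 : forall w, T 0%N w = t0)
  (hTinc : forall k w, (T k w < T k.+1 w)%N)
  (hindX : forall z, indep_gaps_process (Pz z) X (gap T))
  (hindtau : forall z, mutually_indep_gaps (Pz z) (gap T))
  (hidtau : forall z, ident_distr_gaps (Pz z) (gap T)) :
  (* (a) *)
  (forall (z : Zt) (k : nat) (h : nat -> 'I_N.+1) (l' : nat -> nat)
          (i j : 'I_N.+1) (l : nat),
     (1 <= k)%N -> (forall m, (1 <= m <= k)%N -> (0 < l' m)%N) -> (0 < l)%N ->
     let C := [set w | obs X T k w = i /\
                       (forall m, (1 <= m < k)%N -> obs X T m w = h m) /\
                       (forall m, (1 <= m <= k)%N -> gap T m w = l' m)] in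
     0 < Pr (Pz z) C ->
     cprob (Pz z) [set w | obs X T k.+1 w = j /\ gap T k.+1 w = l] C
     = cprob (Pz z) [set w | obs X T k.+1 w = j /\ gap T k.+1 w = l]
                    [set w | obs X T k w = i]) /\
  (* (b) *)
  (forall (z : Zt) (t t' k : nat) (i j : 'I_N.+1),
     (t < t')%N ->
     let C := [set w | X (T k w) w = i /\ T k.+1 w = t' /\ T k w = t] in
     0 < Pr (Pz z) C ->
     cprob (Pz z) [set w | X (T k.+1 w) w = j] C = (P z ^+ (t' - t)) i j) /\
  (* (c) *)
  (forall (z : Zt) (k k' : nat) (i : 'I_N.+1) (l : nat),
     0 < Pr (Pz z) [set w | obs X T k w = i] ->
     0 < Pr (Pz z) [set w | obs X T k' w = i] ->
     cprob (Pz z) [set w | gap T k.+1 w = l] [set w | obs X T k w = i]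
     = cprob (Pz z) [set w | gap T k'.+1 w = l] [set w | obs X T k' w = i]).
Proof.
split; [|split].
- move=> z k h l' i j l k_ge1 _ _ C C_gt0.
  have obs_gt0 : 0 < Pr (Pz z) [set w | obs X T k w = i].
    apply: lt_le_trans C_gt0 _; apply: le_Pr => [||w []] //.
      exact: (measurable_obs_history measX measT hT0 hTinc _ h l' i k_ge1).
    exact: measurable_obs.
  rewrite (cprobE _ C_gt0 (Pr_next_obs_history measX (hMC z) hT0 hTinc
                          (hindX z) (hindtau z) k h l' i j l k_ge1)).
  by rewrite (cprobE _ obs_gt0 (Pr_next_obs measX measT (hMC z) hT0 hTinc
                               (hindX z) (hindtau z) k i j l)).
- move=> z t t' k i j lt_tt' C C_gt0; apply: cprobE _ C_gt0 _.
  exact: (Pr_obs_jump measX measT (hMC z) hT0 hTinc (hindX z) k t t' i j lt_tt').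
- move=> z k k' i l obs_gt0 obs'_gt0.
  have gap_obs := Pr_gap_obs measX measT hT0 hTinc (hindX z) (hindtau z) (hidtau z).
  by rewrite (cprobE _ obs_gt0 (gap_obs _ _ _)) (cprobE _ obs'_gt0 (gap_obs _ _ _)).
Qed.
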